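(* Let $n\ge 2$ and let $\mathcal{P}(Q_{4n})$ be the power graph of the generalized quaternion group $Q_{4n}$. Then $-3\sqrt2$ is an eigenvalue of the Sombor matrix of $\mathcal{P}(Q_{4n})$ with multiplicity at least $n$.
   Context: For a finite simple graph $\Gamma$ with vertices $u_1,\dots,u_N$, the Sombor matrix $S(\Gamma)$ has $(i,j)$ entry $\sqrt{\deg(u_i)^2+\deg(u_j)^2}$ if $u_i,u_j$ are adjacent and $0$ otherwise. $Q_{4n}=\langle a,b: a^{2n}=e,\ a^n=b^2,\ ba=a^{-1}b\rangle$. The power graph $\mathcal{P}(G)$ of a group $G$ has vertex set $G$, two distinct vertices $x,y$ being adjacent iff $x\in\langle y\rangle$ or $y\in\langle x\rangle$. *)

From HB Require Import structures.
From mathcomp Require Import all_boot all_order all_algebra all_fingroup.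
From mathcomp Require Import ring.
Set Implicit Arguments. Unset Strict Implicit. Unset Printing Implicit Defensive.
Import Order.TTheory GRing.Theory Num.Theory.

(* The generalized quaternion group Q_{4n} = <a, b | a^{2n}, a^n = b^2,   *)
(* ba = a^{-1} b>, modelled concretely: the pair (i, e) : 'Z_(2n) * bool  *)
(* stands for a^i b^e.  Multiplication follows from b a^j = a^{-j} b and  *)
(* b^2 = a^n:                                                             *)
(*   a^i b^0 * a^j b^f = a^(i+j) b^f                                      *)
(*   a^i b^1 * a^j b^0 = a^(i-j) b                                        *)
(*   a^i b^1 * a^j b^1 = a^(i-j+n)                                        *)
(* (Meaningful for n >= 1, where 'Z_(2n) is Z/2nZ.)                        *)
Section Quaternion.
Variable n : nat.

Definition quat_type := ('Z_(n.*2) * bool)%type.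
HB.instance Definition _ := Finite.on quat_type.

Local Open Scope ring_scope.

Definition quat_mul (x y : quat_type) : quat_type :=
  let: (i, e) := x in let: (j, f) := y in
  if e then (if f then (i - j + n%:R, false) else (i - j, true))
  else (i + j, f).

Definition quat_one : quat_type := (0, false).

Definition quat_inv (x : quat_type) : quat_type :=
  let: (i, e) := x in if e then (i + n%:R, true) else (- i, false).

Lemma quat_nn : (n%:R + n%:R : 'Z_(n.*2)) = 0.
Proof.
rewrite -natrD addnn.
case: n => [|m]; first by [].
by apply: val_inj; rewrite Zp_nat /= doubleS modnn.
Qed.

Lemma quat_mulA : associative quat_mul.
Proof.
have nN : (- n%:R : 'Z_(n.*2)) = n%:R.
  by apply/eqP; rewrite eq_sym -subr_eq0 opprK quat_nn.
move=> [i [|]] [j [|]] [k [|]] /=; congr pair;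
  first [ring | rewrite -[in RHS]nN; ring | rewrite -[in LHS]nN; ring].
Qed.

Lemma quat_mul1g : left_id quat_one quat_mul.
Proof. by move=> [i e]; rewrite /= add0r. Qed.

Lemma quat_mulVg : left_inverse quat_one quat_inv quat_mul.
Proof.
move=> [i [|]] /=; congr pair; last by rewrite addNr.
by rewrite -quat_nn; ring.
Qed.

HB.instance Definition _ :=
  Finite_isGroup.Build quat_type quat_mulA quat_mul1g quat_mulVg.



End Quaternion.

Notation Q4n n := (quat_type n).

Lemma quat_mulgE n (x y : Q4n n) : (x * y)%g = quat_mul x y.
Proof. by []. Qed.


Definition power_adj (gT : finGroupType) : rel gT :=
  fun x y => (x != y) && ((x \in <[y]>%g) || (y \in <[x]>%g)).

Definition gdeg (V : finType) (adj : rel V) (x : V) : nat := #|[set y | adj x y]|.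

Definition sombor_matrix (R : rcfType) (V : finType) (adj : rel V) : 'M[R]_#|V| :=
  \matrix_(i, j)
    (if adj (enum_val i) (enum_val j)
     then Num.sqrt (((gdeg adj (enum_val i)) ^ 2 + (gdeg adj (enum_val j)) ^ 2)%N%:R)
     else 0)%R.

Definition qa n : Q4n n := (1%R, false).
Definition qb n : Q4n n := (0%R, true).

Lemma qa_expg n k : (qa n ^+ k)%g = ((k%:R)%R, false).
Proof.
elim: k => [|k IH] //; rewrite expgS IH quat_mulgE /=.
by rewrite -natr1 GRing.addrC.
Qed.

Lemma quat_relations n :
  [/\ (qa n ^+ n.*2 = 1)%g, (qb n * qb n = qa n ^+ n)%g
    & (qb n * qa n = (qa n)^-1 * qb n)%g].
Proof.
split; rewrite ?qa_expg //.
- by rewrite -[X in (X%:R)%R]addnn GRing.natrD quat_nn.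
- by rewrite quat_mulgE /= GRing.subr0 GRing.add0r.
- by rewrite !quat_mulgE /= GRing.add0r GRing.addr0.
Qed.

From mathcomp Require Import all_boot all_order all_algebra all_fingroup.

(* Every x = a^r b of Q_{4n} has order 4 with x^2 = a^n, and the only cyclic
   subgroup containing x is <x> = {1, x, a^n, x^-1}.  Hence in the power graph
   x and x^-1 = a^(r+n) b are adjacent vertices of degree 3 whose other
   neighbours are the same, namely 1 and a^n.  For such closed twins the row
   vector e_x - e_y is a left eigenvector of the Sombor matrix for the
   eigenvalue -sqrt(3^2 + 3^2) = -3 sqrt 2.  The n pairs {a^r b, a^(r+n) b},
   r < n, give n independent eigenvectors, and an eigenspace of dimension k
   makes (X - lambda)^k divide the characteristic polynomial. *)

Set Implicit Arguments.
Unset Strict Implicit.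
Unset Printing Implicit Defensive.
Import GRing.Theory Num.Theory.
Local Open Scope ring_scope.

Lemma dvdp_det_rows (F : fieldType) N k (p : {poly F}) (M : 'M[{poly F}]_N) :
  (k <= N)%N -> (forall (i : 'I_N) j, (i < k)%N -> p %| M i j) ->
  p ^+ k %| \det M.
Proof.
move=> leqkN pM.
pose d := \row_(i < N) (if (i < k)%N then p else 1).
pose Q := \matrix_(i, j) (if (i < k)%N then M i j %/ p else M i j).
have -> : M = diag_mx d *m Q.
  apply/matrixP => i j; rewrite mul_diag_mx !mxE.
  by case: ifP => ik; [rewrite mulrC divpK ?pM | rewrite mul1r].
rewrite det_mulmx det_diag dvdp_mulr //.
rewrite (eq_bigr (fun i : 'I_N => if (i < k)%N then p else 1)) => [|i _].
  rewrite -big_mkcond (big_ord_narrow (op := *%R) (F := fun=> p) leqkN).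
  by rewrite prodr_const card_ord.
by rewrite mxE.
Qed.

Lemma eigenrows_dvd_char (F : fieldType) N k (P A : 'M[F]_N) (lam : F) :
  P \in unitmx -> (k <= N)%N ->
  (forall i : 'I_N, (i < k)%N -> row i P *m A = lam *: row i P) ->
  ('X - lam%:P) ^+ k %| char_poly A.
Proof.
move=> Punit leqkN eigP.
have : ('X - lam%:P) ^+ k %| \det (map_mx polyC P *m char_poly_mx A).
  apply: dvdp_det_rows => // i j ik.
  have PAij : \sum_l P i l * A l j = lam * P i j.
    by have /rowP/(_ j) := eigP i ik; rewrite -row_mul !mxE.
  rewrite mulmxBr mul_mx_scalar -map_mxM !mxE PAij rmorphM /= -mulrBl.
  exact: dvdp_mulr.
by rewrite det_mulmx det_map_mx mul_polyC dvdpZr // -unitfE -unitmxE.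
Qed.

Lemma row_pid_mul (F : fieldType) r N (B : 'M[F]_N) (i : 'I_r)
    (leqrN : (r <= N)%N) :
  row i (pid_mx r *m B : 'M_(r, N)) = row (widen_ord leqrN i) B.
Proof.
rewrite row_mul [RHS]rowE; congr (_ *m _); apply/rowP => j; rewrite !mxE /=.
by rewrite ltn_ord andbT eq_sym.
Qed.

Lemma row_free_eigen_dvd_char (F : fieldType) N k (V : 'M[F]_(k, N))
    (A : 'M_N) (lam : F) :
  row_free V -> V *m A = lam *: V -> ('X - lam%:P) ^+ k %| char_poly A.
Proof.
move=> /eqP rankV eigV; rewrite -rankV.
have /submxP [D defB] : (row_base V <= V)%MS by rewrite eq_row_base.
have eigB : row_base V *m A = lam *: row_base V.
  by rewrite defB -mulmxA eigV scalemxAr.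
apply: (eigenrows_dvd_char (row_ebase_unit V) (rank_leq_col V)) => i ir.
have -> : i = widen_ord (rank_leq_col V) (Ordinal ir) by apply: val_inj.
by rewrite -!row_pid_mul -row_mul eigB linearZ.
Qed.

Lemma sqrt_sq_add_sq (R : rcfType) (d : nat) :
  Num.sqrt ((d ^ 2 + d ^ 2)%N%:R : R) = d%:R * Num.sqrt 2%:R.
Proof.
rewrite addnn -mul2n natrM natrX mulrC sqrtrM ?exprn_ge0 ?ler0n //.
by rewrite sqrtr_sqr ger0_norm ?ler0n.
Qed.

Section SomborTwins.
Variables (R : rcfType) (V : finType) (adj : rel V).
Hypotheses (adj_sym : symmetric adj) (adj_irr : irreflexive adj).

Local Notation S := (sombor_matrix R adj).
Local Notation e x := (delta_mx 0 (enum_rank x) : 'rV[R]_#|V|).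

Lemma sombor_twins_row (x y : V) (d : nat) :
  adj x y -> (forall w, w != x -> w != y -> adj x w = adj y w) ->
  gdeg adj x = d -> gdeg adj y = d ->
  row (enum_rank x) S - row (enum_rank y) S =
  - Num.sqrt ((d ^ 2 + d ^ 2)%N%:R) *: (e x - e y).
Proof.
move=> adj_xy twin_xy deg_x deg_y; apply/rowP => j.
have [w ->] : exists w, j = enum_rank w.
  by exists (enum_val j); rewrite enum_valK.
have neq_xy : x != y by apply: contraTneq adj_xy => ->; rewrite adj_irr.
rewrite !mxE !enum_rankK !(inj_eq enum_rank_inj) /= deg_x deg_y.
have [-> | w_x] := eqVneq w x.
  by rewrite adj_irr (adj_sym y) adj_xy (negPf neq_xy) deg_x sub0r subr0 mulr1.
have [-> | w_y] := eqVneq w y.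
  by rewrite adj_irr adj_xy deg_y subr0 sub0r mulrN1 opprK.
by rewrite twin_xy // subrr subrr mulr0.
Qed.

Lemma sombor_twins_mup (k d : nat) (f g : 'I_k -> V) :
  injective f -> (forall r s, f r != g s) -> (forall r, adj (f r) (g r)) ->
  (forall r w, w != f r -> w != g r -> adj (f r) w = adj (g r) w) ->
  (forall r, gdeg adj (f r) = d) -> (forall r, gdeg adj (g r) = d) ->
  (k <= mup (- Num.sqrt ((d ^ 2 + d ^ 2)%N%:R)) (char_poly S))%N.
Proof.
move=> f_inj fg_neq adj_fg twin_fg deg_f deg_g.
rewrite mup_geq ?monic_neq0 ?char_poly_monic //.
pose E := \matrix_r (e (f r) - e (g r)) : 'M[R]_(k, #|V|).
apply: (@row_free_eigen_dvd_char _ _ _ E).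
  apply/row_freeP; exists (\matrix_(j, s) (j == enum_rank (f s))%:R).
  apply/row_matrixP => r; rewrite row_mul rowK mulmxBl -!rowE.
  apply/rowP => s; rewrite !mxE !(inj_eq enum_rank_inj) (inj_eq f_inj).
  by rewrite [g r == _]eq_sym (negPf (fg_neq s r)) subr0.
apply/row_matrixP => r.
rewrite row_mul rowK linearZ /= rowK mulmxBl -!rowE.
exact: sombor_twins_row (adj_fg r) (twin_fg r) (deg_f r) (deg_g r).
Qed.

End SomborTwins.

Lemma power_adj_sym (gT : finGroupType) : symmetric (@power_adj gT).
Proof. by move=> x y; rewrite /power_adj eq_sym orbC. Qed.

Lemma power_adj_irr (gT : finGroupType) : irreflexive (@power_adj gT).
Proof. by move=> x; rewrite /power_adj eqxx. Qed.

Section QuaternionPowerGraph.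
Variable n : nat.
Local Notation Q := (Q4n n).
Local Notation nZ := (n%:R : 'Z_(n.*2)).

Lemma oppZn : - nZ = nZ.
Proof. by apply/eqP; rewrite eq_sym -subr_eq0 opprK quat_nn. Qed.

Lemma addZnn (j : 'Z_(n.*2)) : j + nZ + nZ = j.
Proof. by rewrite -addrA quat_nn addr0. Qed.

Lemma mem_cycle_quat_b (i : 'Z_(n.*2)) (y : Q) :
  (y \in <[(i, true) : Q]>%g) =
  [|| y == 1%g, y == (i, true), y == (nZ, false) | y == (i + nZ, true)].
Proof.
apply/cycleP/idP => [[k ->]|].
  elim: k => [|k IH]; first by rewrite expg0 eqxx.
  rewrite expgS quat_mulgE.
  case/or4P: IH => /eqP -> /=.
  - by rewrite subr0 eqxx !orbT.
  - by rewrite subrr add0r eqxx !orbT.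
  - by rewrite -[X in _ - X]oppZn opprK eqxx !orbT.
  - by rewrite opprD addrA subrr add0r addNr eqxx.
case/or4P => /eqP ->; first by exists 0%N.
- by exists 1%N.
- by exists 2%N; rewrite !expgS expg0 !quat_mulgE /= subr0 subrr add0r.
- by exists 3%N; rewrite !expgS expg0 !quat_mulgE /= subr0 subrr add0r oppZn.
Qed.

Lemma mem_cycle_quat_a (j : 'Z_(n.*2)) (y : Q) :
  y \in <[(j, false) : Q]>%g -> y.2 = false.
Proof.
case/cycleP => k ->; elim: k => [|k IH] //.
by rewrite expgS quat_mulgE; case: (((j, false) : Q) ^+ k)%g IH => a b /= ->.
Qed.

Hypothesis n_gt0 : (0 < n)%N.

Lemma val_Zp_nat k : (k < n.*2)%N -> val (k%:R : 'Z_(n.*2)) = k.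
Proof.
move=> lt_k_2n; rewrite Zp_nat /= Zp_cast ?modn_small //.
by rewrite -addnn -(prednK n_gt0) addSn ltnS addnS.
Qed.

Lemma Zn_neq0 : nZ != 0.
Proof.
apply/eqP => /(congr1 val); rewrite val_Zp_nat => [/= n0|].
  by move: n_gt0; rewrite n0.
by rewrite -addnn -{1}[n]addn0 ltn_add2l.
Qed.

Lemma addZn_neq (j : 'Z_(n.*2)) : (j == j + nZ) = false.
Proof.
apply/negbTE; rewrite -subr_eq0 opprD addrA subrr add0r oppr_eq0.
exact: Zn_neq0.
Qed.

Lemma power_adj_quat_b (i : 'Z_(n.*2)) (y : Q) :
  power_adj ((i, true) : Q) y =
  [|| y == 1%g, y == (nZ, false) | y == (i + nZ, true)].
Proof.
rewrite /power_adj mem_cycle_quat_b; case: y => j [|].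
  rewrite mem_cycle_quat_b !xpair_eqE /= !andbF !andbT /=.
  have -> : (i == j + nZ) = (j == i + nZ).
    by apply/eqP/eqP => ->; rewrite addZnn.
  by case: (eqVneq i j) => [->|ne] /=; rewrite ?addZn_neq ?orbb.
have /negPf -> : ((i, true) : Q) \notin <[(j, false) : Q]>%g.
  by apply/negP => /mem_cycle_quat_a.
by rewrite !xpair_eqE /= !andbF !andbT.
Qed.

Lemma gdeg_quat_b (i : 'Z_(n.*2)) : gdeg (@power_adj Q) (i, true) = 3%N.
Proof.
rewrite /gdeg; have -> : [set y | @power_adj Q (i, true) y] =
    (0, false) |: ((nZ, false) |: [set (i + nZ, true)]) :> {set Q}.
  by apply/setP => y; rewrite !inE power_adj_quat_b.
rewrite !cardsU1 cards1 !inE !xpair_eqE /= !andbF orbF.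
by rewrite eq_sym (negPf Zn_neq0).
Qed.

End QuaternionPowerGraph.

Theorem theorem6p4 (R : rcfType) (n : nat) (hn : (2 <= n)%N) :
  (n <= mup (- (3%:R * Num.sqrt (2%:R : R)))%R
             (char_poly (sombor_matrix R (@power_adj (Q4n n)))))%N.
Proof.
have n_gt0 : (0 < n)%N by apply: leq_trans hn.
have lt_r_2n (r : 'I_n) : (r < n.*2)%N by rewrite -addnn ltn_addr.
have lt_rn_2n (r : 'I_n) : (r + n < n.*2)%N by rewrite -addnn ltn_add2r.
(* [f r] is [a^r b] and [g r] is its inverse [a^(r+n) b]. *)
pose f (r : 'I_n) : Q4n n := (r%:R, true).
pose g (r : 'I_n) : Q4n n := (r%:R + n%:R, true).
rewrite -sqrt_sq_add_sq.
apply: (sombor_twins_mup R (@power_adj_sym _) (@power_adj_irr _)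
          (f := f) (g := g)).
- move=> r s [/(congr1 val)]; rewrite !val_Zp_nat //; exact: val_inj.
- move=> r s; apply/eqP => [[/(congr1 val)]].
  rewrite -natrD !val_Zp_nat // => eq_rs.
  by move: (ltn_ord r); rewrite eq_rs ltnNge leq_addl.
- by move=> r; rewrite power_adj_quat_b // eqxx !orbT.
- move=> r w; rewrite !power_adj_quat_b // addZnn => /negPf f_w /negPf g_w.
  by rewrite [w == (_ + _, _)]g_w [w == (r%:R, true)]f_w.
- by move=> r; rewrite gdeg_quat_b.
- by move=> r; rewrite gdeg_quat_b.
Qed.
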